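(* For $\epsilon>0$ sufficiently small, the map $\{(\phi,\theta)\in S^2: y\neq 0\}\to S^2\times S^2\setminus\Delta$, $(\phi,\theta)\mapsto p_2(L_s(\phi,\theta))=(\hat a,-\hat b)$, is an immersion, where for $\theta\in(0,\pi)$ $$\hat a=(-\sin(\phi+\nu),-\cos(\phi+\nu),0),$$ $$\hat b=D^{-1}\Big(\cos^2\nu\cos^2\theta\sin(\phi+\nu)+\sin^2\theta\sin(\phi-\nu),\ \cos^2\nu\cos^2\theta\cos(\phi+\nu)+\sin^2\theta\cos(\phi-\nu),\ -\tfrac12\sin 2\nu\sin2\theta\Big),$$ and for $\theta\in(\pi,2\pi)$, $\hat a$ and the first two components of $\hat b$ are replaced by their negatives (the third component of $\hat b$ unchanged); here $\nu=\epsilon\sin\phi$ and $D=\cos^2\nu+\sin^2\nu\sin^2\theta$.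
   Context: $(\phi,\theta)$ are spherical-polar coordinates on $S^2$ with Cartesian coordinates $(x,y,z)=(\sin\phi\cos\theta,\sin\phi\sin\theta,\cos\phi)$, so $\{y\neq0\}=\{\phi\in(0,\pi),\theta\notin\{0,\pi\}\}$. $\Delta=\{(\hat r,\hat r)\}\subset S^2\times S^2$ is the diagonal. ($\hat a,\hat b$ are the unit vectors of the puncture holonomies $a=i\hat a\cdot\vec\sigma$, $b=i\hat b\cdot\vec\sigma$ of the normalized representative of the point $L_s(\phi,\theta)$ of the sphere Lagrangian in the traceless character variety of the twice-punctured torus, and $p_2$ is the homeomorphism $P_4\to S^2\times S^2\setminus\Delta$.) *)

From Stdlib Require Import Reals.
Open Scope R_scope.

Definition nu (eps phi : R) : R := eps * sin phi.

Definition Dden (eps phi theta : R) : R :=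
  (cos (nu eps phi))^2 + (sin (nu eps phi))^2 * (sin theta)^2.

Definition sgnth (theta : R) : R :=
  if Rlt_dec theta PI then 1 else -1.

(* the domain {y <> 0} in spherical coordinates *)
Definition dom (phi theta : R) : Prop :=
  0 < phi < PI /\ ((0 < theta < PI) \/ (PI < theta < 2 * PI)).

Definition a1 eps phi theta := sgnth theta * (- sin (phi + nu eps phi)).
Definition a2 eps phi theta := sgnth theta * (- cos (phi + nu eps phi)).
Definition a3 (eps phi theta : R) : R := 0.

Definition b1 eps phi theta :=
  sgnth theta *
  ((cos (nu eps phi))^2 * (cos theta)^2 * sin (phi + nu eps phi)
   + (sin theta)^2 * sin (phi - nu eps phi)) / Dden eps phi theta.
Definition b2 eps phi theta :=
  sgnth theta *
  ((cos (nu eps phi))^2 * (cos theta)^2 * cos (phi + nu eps phi)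
   + (sin theta)^2 * cos (phi - nu eps phi)) / Dden eps phi theta.
Definition b3 eps phi theta :=
  (- (1/2) * sin (2 * nu eps phi) * sin (2 * theta)) / Dden eps phi theta.

(* The map (phi,theta) |-> (a-hat, - b-hat) in R^3 x R^3 = R^6,
   indexed by components k = 0..5. *)
Definition Fmap (eps : R) (k : nat) (phi theta : R) : R :=
  match k with
  | 0%nat => a1 eps phi theta
  | 1%nat => a2 eps phi theta
  | 2%nat => a3 eps phi theta
  | 3%nat => - b1 eps phi theta
  | 4%nat => - b2 eps phi theta
  | _ => - b3 eps phi theta
  end.

Definition continuous2 (g : R -> R -> R) (p t : R) : Prop :=
  forall e, 0 < e -> exists d, 0 < d /\
    forall p' t', Rabs (p' - p) < d -> Rabs (t' - t) < d ->
      Rabs (g p' t' - g p t) < e.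

Definition C1_immersion_on (U : R -> R -> Prop) (n : nat)
    (f : nat -> R -> R -> R) : Prop :=
  exists d1 d2 : nat -> R -> R -> R,
    (forall k p t, (k < n)%nat -> U p t ->
       derivable_pt_lim (fun x => f k x t) p (d1 k p t) /\
       derivable_pt_lim (fun y => f k p y) t (d2 k p t)) /\
    (forall k p t, (k < n)%nat -> U p t ->
       continuous2 (d1 k) p t /\ continuous2 (d2 k) p t) /\
    (forall p t, U p t -> forall u v : R,
       (forall k, (k < n)%nat -> u * d1 k p t + v * d2 k p t = 0) ->
       u = 0 /\ v = 0).

(* The sign [sgnth θ] is locally constant off θ = π, so the map is the smooth
   map [Fsigned] with a frozen sign s = ±1, whose partial derivatives are
   explicit and continuous wherever D ≠ 0; for 0 < ε < 1 we have 0 < ν < 1,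
   hence D > 0, and everything is smooth on the domain.
   Injectivity of the Jacobian: â depends on φ only, and ∂â/∂φ is
   s(1 + ε cos φ) times a unit vector, which forces u = 0.  Then
   ∂(−b̂₁, −b̂₂)/∂θ = (4 s sinθ cosθ cos²ν sinν / D²)(cos φ, −sin φ), which is
   nonzero unless sinθ cosθ = 0; there ∂(−b̂₃)/∂θ = sin 2ν cos 2θ / D with
   cos 2θ = ±1.  Hence v = 0 as well. *)

From Stdlib Require Import Reals Lra Lia Psatz.
From Coquelicot Require Import Coquelicot.
Open Scope R_scope.

Definition num_b1 (e p t : R) : R :=
  cos (nu e p) ^ 2 * cos t ^ 2 * sin (p + nu e p) + sin t ^ 2 * sin (p - nu e p).
Definition num_b2 (e p t : R) : R :=
  cos (nu e p) ^ 2 * cos t ^ 2 * cos (p + nu e p) + sin t ^ 2 * cos (p - nu e p).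
Definition num_b3 (e p t : R) : R := - (1 / 2) * sin (2 * nu e p) * sin (2 * t).

Definition Fsigned (e s : R) (k : nat) (p t : R) : R :=
  match k with
  | 0%nat => s * - sin (p + nu e p)
  | 1%nat => s * - cos (p + nu e p)
  | 2%nat => 0
  | 3%nat => - (s * num_b1 e p t / Dden e p t)
  | 4%nat => - (s * num_b2 e p t / Dden e p t)
  | _ => - (num_b3 e p t / Dden e p t)
  end.

Lemma Fmap_Fsigned e k p t : Fmap e k p t = Fsigned e (sgnth t) k p t.
Proof. reflexivity. Qed.

Definition Dden_dp (e p t : R) : R := 2 * sin (nu e p) * cos (nu e p) * (e * cos p) * (sin t ^ 2 - 1).
Definition Dden_dt (e p t : R) : R := 2 * sin (nu e p) ^ 2 * sin t * cos t.

Definition num_b1_dp (e p t : R) : R :=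
  - 2 * cos (nu e p) * sin (nu e p) * (e * cos p) * cos t ^ 2 * sin (p + nu e p)
  + cos (nu e p) ^ 2 * cos t ^ 2 * cos (p + nu e p) * (1 + e * cos p)
  + sin t ^ 2 * cos (p - nu e p) * (1 - e * cos p).
Definition num_b2_dp (e p t : R) : R :=
  - 2 * cos (nu e p) * sin (nu e p) * (e * cos p) * cos t ^ 2 * cos (p + nu e p)
  - cos (nu e p) ^ 2 * cos t ^ 2 * sin (p + nu e p) * (1 + e * cos p)
  - sin t ^ 2 * sin (p - nu e p) * (1 - e * cos p).
Definition num_b3_dp (e p t : R) : R := - (e * cos p) * cos (2 * nu e p) * sin (2 * t).

Definition num_b1_dt (e p t : R) : R :=
  2 * sin t * cos t * (sin (p - nu e p) - cos (nu e p) ^ 2 * sin (p + nu e p)).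
Definition num_b2_dt (e p t : R) : R :=
  2 * sin t * cos t * (cos (p - nu e p) - cos (nu e p) ^ 2 * cos (p + nu e p)).
Definition num_b3_dt (e p t : R) : R := - sin (2 * nu e p) * cos (2 * t).

Definition quot_deriv (n dn d dd : R) : R := (dn * d - n * dd) / d ^ 2.

Definition Fsigned_dp (e s : R) (k : nat) (p t : R) : R :=
  match k with
  | 0%nat => s * - (cos (p + nu e p) * (1 + e * cos p))
  | 1%nat => s * (sin (p + nu e p) * (1 + e * cos p))
  | 2%nat => 0
  | 3%nat => - (s * quot_deriv (num_b1 e p t) (num_b1_dp e p t) (Dden e p t) (Dden_dp e p t))
  | 4%nat => - (s * quot_deriv (num_b2 e p t) (num_b2_dp e p t) (Dden e p t) (Dden_dp e p t))
  | _ => - quot_deriv (num_b3 e p t) (num_b3_dp e p t) (Dden e p t) (Dden_dp e p t)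
  end.

Definition Fsigned_dt (e s : R) (k : nat) (p t : R) : R :=
  match k with
  | 0%nat | 1%nat | 2%nat => 0
  | 3%nat => - (s * quot_deriv (num_b1 e p t) (num_b1_dt e p t) (Dden e p t) (Dden_dt e p t))
  | 4%nat => - (s * quot_deriv (num_b2 e p t) (num_b2_dt e p t) (Dden e p t) (Dden_dt e p t))
  | _ => - quot_deriv (num_b3 e p t) (num_b3_dt e p t) (Dden e p t) (Dden_dt e p t)
  end.

Ltac nonzero_by HD := let H := fresh in intro H; apply HD; rewrite <- H; ring.

Ltac partial_derivative HD :=
  apply is_derive_Reals; auto_derive;
  [ repeat split; nonzero_by HD
  | unfold Rminus; field; nonzero_by HD ].

Lemma Fsigned_dp_correct e s k p t : Dden e p t <> 0 ->
  derivable_pt_lim (fun x => Fsigned e s k x t) p (Fsigned_dp e s k p t).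
Proof.
  intro HD.
  destruct k as [|[|[|[|[|k]]]]];
    cbv beta iota delta [Fsigned Fsigned_dp quot_deriv num_b1 num_b2 num_b3
      num_b1_dp num_b2_dp num_b3_dp Dden_dp];
    unfold Dden, nu in *; first [apply derivable_pt_lim_const | partial_derivative HD].
Qed.

Lemma Fsigned_dt_correct e s k p t : Dden e p t <> 0 ->
  derivable_pt_lim (fun y => Fsigned e s k p y) t (Fsigned_dt e s k p t).
Proof.
  intro HD.
  destruct k as [|[|[|[|[|k]]]]];
    cbv beta iota delta [Fsigned Fsigned_dt quot_deriv num_b1 num_b2 num_b3
      num_b1_dt num_b2_dt num_b3_dt Dden_dt];
    unfold Dden, nu in *; first [apply derivable_pt_lim_const | partial_derivative HD].
Qed.

Lemma sgnth_locally_const t : t <> PI -> locally t (fun y => sgnth y = sgnth t).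
Proof.
  intro Ht. exists (mkposreal _ (Rabs_pos_lt (t - PI) ltac:(lra))).
  intros y Hy. change (Rabs (y - t) < Rabs (t - PI)) in Hy.
  unfold sgnth.
  destruct (Rlt_dec t PI) as [Hlt|Hge].
  - rewrite (Rabs_left (t - PI)) in Hy by lra. apply Rabs_def2 in Hy.
    destruct (Rlt_dec y PI); [reflexivity | lra].
  - rewrite (Rabs_right (t - PI)) in Hy by lra. apply Rabs_def2 in Hy.
    destruct (Rlt_dec y PI); [lra | reflexivity].
Qed.

Lemma Fmap_dt_correct e k p t : t <> PI -> Dden e p t <> 0 ->
  derivable_pt_lim (fun y => Fmap e k p y) t (Fsigned_dt e (sgnth t) k p t).
Proof.
  intros Ht HD. apply is_derive_Reals.
  apply (is_derive_ext_loc (fun y => Fsigned e (sgnth t) k p y)).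
  - apply (filter_imp (fun y => sgnth y = sgnth t)); [|exact (sgnth_locally_const t Ht)].
    intros y Hy. rewrite Fmap_Fsigned, Hy. reflexivity.
  - apply is_derive_Reals, Fsigned_dt_correct, HD.
Qed.

Lemma continuity_2d_pt_div f g x y :
  continuity_2d_pt f x y -> continuity_2d_pt g x y -> g x y <> 0 ->
  continuity_2d_pt (fun u v => f u v / g u v) x y.
Proof.
  intros Hf Hg Hg0. apply continuity_2d_pt_mult; [exact Hf|].
  apply continuity_2d_pt_inv; assumption.
Qed.

Lemma continuity_2d_pt_comp1 (h : R -> R) f x y :
  continuity h -> continuity_2d_pt f x y ->
  continuity_2d_pt (fun u v => h (f u v)) x y.
Proof. intros Hh Hf. apply continuity_1d_2d_pt_comp; [apply Hh | exact Hf]. Qed.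

Ltac continuity_2d :=
  match goal with
  | |- continuity_2d_pt (fun _ _ => ?c) _ _ => apply continuity_2d_pt_const
  | |- continuity_2d_pt (fun u _ => u) _ _ => apply continuity_2d_pt_id1
  | |- continuity_2d_pt (fun _ v => v) _ _ => apply continuity_2d_pt_id2
  | |- continuity_2d_pt (fun u v => @?f u v + @?g u v) _ _ =>
       apply (continuity_2d_pt_plus f g); continuity_2d
  | |- continuity_2d_pt (fun u v => @?f u v - @?g u v) _ _ =>
       apply (continuity_2d_pt_minus f g); continuity_2d
  | |- continuity_2d_pt (fun u v => @?f u v * @?g u v) _ _ =>
       apply (continuity_2d_pt_mult f g); continuity_2d
  | |- continuity_2d_pt (fun u v => @?f u v / @?g u v) _ _ =>
       apply (continuity_2d_pt_div f g); [continuity_2d | continuity_2d | idtac]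
  | |- continuity_2d_pt (fun u v => - @?f u v) _ _ =>
       apply (continuity_2d_pt_opp f); continuity_2d
  | |- continuity_2d_pt (fun u v => sin (@?f u v)) _ _ =>
       apply (continuity_2d_pt_comp1 sin f _ _ continuity_sin); continuity_2d
  | |- continuity_2d_pt (fun u v => cos (@?f u v)) _ _ =>
       apply (continuity_2d_pt_comp1 cos f _ _ continuity_cos); continuity_2d
  | |- continuity_2d_pt (fun u v => @?f u v ^ ?n) _ _ =>
       apply (continuity_2d_pt_comp1 (fun z => z ^ n) f _ _ (derivable_continuous _ (derivable_pow n)));
       continuity_2d
  end.

Lemma Fsigned_dp_continuous e s k p t : Dden e p t <> 0 ->
  continuity_2d_pt (Fsigned_dp e s k) p t.
Proof.
  intro HD.
  destruct k as [|[|[|[|[|k]]]]];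
    cbv beta iota delta [Fsigned_dp quot_deriv num_b1 num_b2 num_b3
      num_b1_dp num_b2_dp num_b3_dp Dden Dden_dp nu];
    continuity_2d; apply pow_nonzero, HD.
Qed.

Lemma Fsigned_dt_continuous e s k p t : Dden e p t <> 0 ->
  continuity_2d_pt (Fsigned_dt e s k) p t.
Proof.
  intro HD.
  destruct k as [|[|[|[|[|k]]]]];
    cbv beta iota delta [Fsigned_dt quot_deriv num_b1 num_b2 num_b3
      num_b1_dt num_b2_dt num_b3_dt Dden Dden_dt nu];
    continuity_2d; apply pow_nonzero, HD.
Qed.

Lemma continuity_2d_pt_sgnth (G : R -> R -> R -> R) p t : t <> PI ->
  continuity_2d_pt (G (sgnth t)) p t ->
  continuity_2d_pt (fun x y => G (sgnth y) x y) p t.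
Proof.
  intros Ht. apply continuity_2d_pt_ext_loc.
  destruct (sgnth_locally_const t Ht) as [d Hd].
  exists d. intros x y _ Hy. rewrite (Hd y Hy). reflexivity.
Qed.

Lemma continuous2_of_continuity_2d_pt f p t :
  continuity_2d_pt f p t -> continuous2 f p t.
Proof.
  intros H e He. destruct (H (mkposreal e He)) as [d Hd].
  exists d. split; [apply cond_pos | exact Hd].
Qed.

Lemma eq0_of_mul_cos_sin x a : x * cos a = 0 -> x * sin a = 0 -> x = 0.
Proof.
  intros Hc Hs. pose proof (sin2_cos2 a) as H1. unfold Rsqr in H1.
  assert (x * x = (x * cos a) ^ 2 + (x * sin a) ^ 2) by (rewrite <- (Rmult_1_r (x * x)), <- H1; ring).
  rewrite Hc, Hs in H. nra.
Qed.

Lemma nu_bounds e p : 0 < e < 1 -> 0 < p < PI -> 0 < nu e p < 1.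
Proof.
  intros He Hp. pose proof (sin_gt_0 p ltac:(lra) ltac:(lra)). pose proof (SIN_bound p).
  unfold nu. nra.
Qed.

Lemma cos_nu_pos e p : 0 < e < 1 -> 0 < cos (nu e p).
Proof.
  intros He. pose proof (SIN_bound p). pose proof PI2_1.
  apply cos_gt_0; unfold nu; nra.
Qed.

Lemma sin_nu_pos e p : 0 < e < 1 -> 0 < p < PI -> 0 < sin (nu e p).
Proof.
  intros He Hp. pose proof (nu_bounds e p He Hp). pose proof PI2_1.
  apply sin_gt_0; lra.
Qed.

Lemma Dden_pos e p t : 0 < e < 1 -> 0 < Dden e p t.
Proof.
  intros He. pose proof (cos_nu_pos e p He). unfold Dden.
  pose proof (pow2_ge_0 (sin (nu e p))). pose proof (pow2_ge_0 (sin t)).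
  pose proof (pow_lt _ 2 H). nra.
Qed.

Lemma dt_numerator_b1 e p t :
  num_b1_dt e p t * Dden e p t - num_b1 e p t * Dden_dt e p t
  = - 4 * (sin t * cos t) * cos (nu e p) ^ 2 * sin (nu e p) * cos p.
Proof.
  unfold num_b1_dt, num_b1, Dden, Dden_dt.
  rewrite sin_plus, sin_minus.
  replace (sin (nu e p) ^ 2) with (1 - cos (nu e p) ^ 2)
    by (pose proof (sin2_cos2 (nu e p)); unfold Rsqr in *; lra).
  replace (sin t ^ 2) with (1 - cos t ^ 2)
    by (pose proof (sin2_cos2 t); unfold Rsqr in *; lra).
  ring.
Qed.

Lemma dt_numerator_b2 e p t :
  num_b2_dt e p t * Dden e p t - num_b2 e p t * Dden_dt e p t
  = 4 * (sin t * cos t) * cos (nu e p) ^ 2 * sin (nu e p) * sin p.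
Proof.
  unfold num_b2_dt, num_b2, Dden, Dden_dt.
  rewrite cos_plus, cos_minus.
  replace (sin (nu e p) ^ 2) with (1 - cos (nu e p) ^ 2)
    by (pose proof (sin2_cos2 (nu e p)); unfold Rsqr in *; lra).
  replace (sin t ^ 2) with (1 - cos t ^ 2)
    by (pose proof (sin2_cos2 t); unfold Rsqr in *; lra).
  ring.
Qed.

Lemma dt_numerator_b3 e p t :
  num_b3_dt e p t * Dden e p t - num_b3 e p t * Dden_dt e p t
  = - sin (2 * nu e p)
      * (cos (2 * t) * Dden e p t - 2 * sin (nu e p) ^ 2 * (sin t * cos t) ^ 2).
Proof. unfold num_b3_dt, num_b3, Dden_dt. rewrite (sin_2a t). field. Qed.

Lemma cos_2a_neq0 t : sin t * cos t = 0 -> cos (2 * t) <> 0.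
Proof.
  intro H. pose proof (sin2_cos2 t) as H1. unfold Rsqr in H1.
  rewrite cos_2a. apply Rmult_integral in H. nra.
Qed.

Lemma Rmult_eq0_l x y : x * y = 0 -> y <> 0 -> x = 0.
Proof. intros H Hy. apply Rmult_integral in H as [H | H]; [exact H | contradiction]. Qed.

Ltac nonzero_factors :=
  repeat first [ assumption
               | apply Rmult_integral_contrapositive_currified
               | apply Rinv_neq_0_compat
               | apply pow_nonzero ];
  (assumption || lra).

Lemma Fsigned_jacobian_injective e s p t u v :
  0 < e < 1 -> 0 < p < PI -> s <> 0 ->
  (forall k, (k < 6)%nat -> u * Fsigned_dp e s k p t + v * Fsigned_dt e s k p t = 0) ->
  u = 0 /\ v = 0.
Proof.
  intros He Hp Hs Hker.
  pose proof (Dden_pos e p t He) as HD.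
  pose proof (cos_nu_pos e p He) as Hc. pose proof (sin_nu_pos e p He Hp) as Hsn.
  assert (Hu : u = 0).
  { pose proof (Hker 0%nat ltac:(lia)) as H0. pose proof (Hker 1%nat ltac:(lia)) as H1.
    cbn [Fsigned_dp Fsigned_dt] in H0, H1.
    assert (Hw : 0 < 1 + e * cos p) by (pose proof (COS_bound p); nra).
    assert (Husw : u * s * (1 + e * cos p) = 0).
    { apply (eq0_of_mul_cos_sin _ (p + nu e p)); lra. }
    apply Rmult_integral in Husw as [Hus | Hw0]; [|lra].
    apply Rmult_integral in Hus as [Hu0 | Hs0]; [exact Hu0 | contradiction]. }
  split; [exact Hu|]. subst u.
  pose proof (Hker 3%nat ltac:(lia)) as H3. pose proof (Hker 4%nat ltac:(lia)) as H4.
  pose proof (Hker 5%nat ltac:(lia)) as H5.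
  cbn [Fsigned_dp Fsigned_dt] in H3, H4, H5. unfold quot_deriv in H3, H4, H5.
  rewrite dt_numerator_b1 in H3. rewrite dt_numerator_b2 in H4.
  rewrite dt_numerator_b3 in H5.
  destruct (Req_dec (sin t * cos t) 0) as [Haxis | Haxis].
  - rewrite Haxis in H5.
    apply (Rmult_eq0_l _ (sin (2 * nu e p) * cos (2 * t) / Dden e p t)).
    + rewrite <- H5. field. lra.
    + assert (sin (2 * nu e p) <> 0) by (rewrite sin_2a; nra).
      pose proof (cos_2a_neq0 t Haxis).
      unfold Rdiv; nonzero_factors.
  - apply (Rmult_eq0_l _ (s * (sin t * cos t) * cos (nu e p) ^ 2 * sin (nu e p) / Dden e p t ^ 2));
      [apply (eq0_of_mul_cos_sin _ p) | unfold Rdiv; nonzero_factors].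
    + apply (Rmult_eq_reg_l 4); [|lra]. rewrite Rmult_0_r, <- H3. field. lra.
    + apply (Rmult_eq_reg_l (-4)); [|lra]. rewrite Rmult_0_r, <- H4. field. lra.
Qed.

Lemma sgnth_neq0 t : sgnth t <> 0.
Proof. unfold sgnth. destruct (Rlt_dec t PI); lra. Qed.

Lemma dom_off_PI p t : dom p t -> t <> PI.
Proof. intros [_ [Ht | Ht]] ->; lra. Qed.

Theorem mainTheorem11 :
  exists eps0 : R, 0 < eps0 /\
    forall eps : R, 0 < eps < eps0 ->
      C1_immersion_on dom 6 (Fmap eps).
Proof.
  exists 1. split; [lra|]. intros e He.
  exists (fun k p t => Fsigned_dp e (sgnth t) k p t),
         (fun k p t => Fsigned_dt e (sgnth t) k p t).
  split; [|split].
  - intros k p t _ Hpt.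
    pose proof (dom_off_PI p t Hpt) as Ht. pose proof (Dden_pos e p t He) as HD.
    split.
    + exact (Fsigned_dp_correct e (sgnth t) k p t ltac:(lra)).
    + exact (Fmap_dt_correct e k p t Ht ltac:(lra)).
  - intros k p t _ Hpt.
    pose proof (dom_off_PI p t Hpt) as Ht. pose proof (Dden_pos e p t He) as HD.
    split; apply continuous2_of_continuity_2d_pt.
    + apply (continuity_2d_pt_sgnth (fun s => Fsigned_dp e s k)); [exact Ht|].
      apply Fsigned_dp_continuous. lra.
    + apply (continuity_2d_pt_sgnth (fun s => Fsigned_dt e s k)); [exact Ht|].
      apply Fsigned_dt_continuous. lra.
  - intros p t [Hp _] u v Hker.
    exact (Fsigned_jacobian_injective e (sgnth t) p t u v He Hp (sgnth_neq0 t) Hker).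
Qed.
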